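(* There exist absolute constants $c_1,c_2>0$ such that the following holds. Suppose $\delta\le e^{-1}$, $C_{n,\delta}\ge c_1\log(n/\delta)$, and $k\ge c_2\, b\,(C_{n,\delta}+1)\max\{\Omega_{\max},E_{\max}\}$. Then $$P\left(\exists (i,j)\in E:\ |F_{ij}-p_{ij}|\ge\sqrt{\frac{C_{n,\delta}}{k\,v_{ij}}}\right)\le\delta.$$
   Context: $G=(V,E)$ is an undirected connected graph on $V=\{1,\dots,n\}$, each edge with a fixed orientation $(i,j)$. Weights $w\in\mathbb{R}^n$ are positive with $b\ge\max_{i,j}w_i/w_j$. For each edge $(i,j)\in E$, $k$ independent comparisons are performed, each won by $i$ with probability $p_{ij}=w_i/(w_i+w_j)$ (independent across edges); $F_{ij}$ is the fraction of them won by $i$. $\rho_{ij}=w_i/w_j$ and $v_{ij}=\rho_{ij}+2+\rho_{ij}^{-1}=1/(p_{ij}(1-p_{ij}))$. $\Omega_{ij}=(e_i-e_j)^TL^\dagger(e_i-e_j)$ is the effective resistance ($L$ the Laplacian, $L^\dagger$ its pseudoinverse), $\Omega_{\max}=\max_{i,j}\Omega_{ij}$. $E_{ij}$ is the set of edges on at least one simple path from $i$ to $j$, $E_{\max}=\max_{i,j}|E_{ij}|$. $C_{n,\delta}$ is a parameter. *)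

From HB Require Import structures.
From mathcomp Require Import all_boot all_order all_algebra.
From mathcomp Require Import boolp reals.
From mathcomp Require Import sequences.
From mathcomp.analysis Require Import exp.
Set Implicit Arguments. Unset Strict Implicit. Unset Printing Implicit Defensive.
Import Order.TTheory GRing.Theory Num.Theory.
Local Open Scope ring_scope.

Section Defs.
Variables (R : realType) (n : nat).
Implicit Types (E : {set 'I_n * 'I_n}) (w : 'I_n -> R).

Definition adj E : rel 'I_n := fun u v => ((u, v) \in E) || ((v, u) \in E).

(* E is a simple undirected graph, each edge stored once with a fixed orientation *)
Definition oriented_simple_graph E : Prop :=
  (forall e, e \in E -> e.1 != e.2) /\
  (forall i j, (i, j) \in E -> (j, i) \notin E).

Definition connected_graph E : Prop := forall i j : 'I_n, connect (adj E) i j.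

Definition bvec (i j : 'I_n) : 'cV[R]_n :=
  \col_l ((l == i)%:R - (l == j)%:R).

Definition laplacian E : 'M[R]_n :=
  \sum_(e in E) (bvec e.1 e.2 *m (bvec e.1 e.2)^T).

Definition is_MP_pinv (A X : 'M[R]_n) : Prop :=
  [/\ A *m X *m A = A, X *m A *m X = X,
      (A *m X)^T = A *m X & (X *m A)^T = X *m A].

Definition eff_res (Ldag : 'M[R]_n) (i j : 'I_n) : R :=
  ((bvec i j)^T *m Ldag *m bvec i j) ord0 ord0.

Definition Omega_max (Ldag : 'M[R]_n) : R :=
  \big[Num.max/0]_(ij : 'I_n * 'I_n) eff_res Ldag ij.1 ij.2.

Definition edges_on_simple_paths E (i j : 'I_n) : {set 'I_n * 'I_n} :=
  [set e in E | `[< exists p : seq 'I_n,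
      [/\ path (adj E) i p, last i p = j, uniq (i :: p) &
          ((e \in zip (i :: p) p) || ((e.2, e.1) \in zip (i :: p) p))] >]].

Definition E_max E : nat :=
  (\max_(ij : 'I_n * 'I_n) #|edges_on_simple_paths E ij.1 ij.2|)%N.

Definition pwin w (i j : 'I_n) : R := w i / (w i + w j).
Definition vcoef w (i j : 'I_n) : R := w i / w j + 2 + w j / w i.

(* Outcome space: omega (e, t) = true iff i wins the t-th comparison on the
   pair e = (i,j).  Coordinates are independent Bernoulli(p_e).  (Coordinates
   of pairs that are not edges are irrelevant dummies and marginalise out.) *)
Definition outcome (k : nat) := {ffun ('I_n * 'I_n) * 'I_k -> bool}.

Definition outcome_prob w k (om : outcome k) : R :=
  \prod_(x : ('I_n * 'I_n) * 'I_k)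
     (if om x then pwin w x.1.1 x.1.2 else 1 - pwin w x.1.1 x.1.2).

Definition Prob w k (A : pred (outcome k)) : R :=
  \sum_(om : outcome k | A om) outcome_prob w om.

Definition Frac k (om : outcome k) (i j : 'I_n) : R :=
  (\sum_(t < k) (om ((i, j), t) : nat))%:R / k%:R.

End Defs.

Arguments Frac {R n k} om i j.
Arguments laplacian {R n} E.

From HB Require Import structures.
From mathcomp Require Import all_boot all_order all_algebra.
From mathcomp Require Import boolp reals.
From mathcomp Require Import sequences.
From mathcomp.analysis Require Import exp.
From mathcomp Require Import ring lra.
Import Order.TTheory GRing.Theory Num.Theory.
Local Open Scope ring_scope.

(* On one edge, k F_ij is a sum of k independent Bernoulli(p) variables, p = p_ij.  From
   e^x <= 1 + x + 2 x^2 (x <= 1/2), a centred Bernoulli variable has moment generating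
   function at most exp (2 mu^2 p (1 - p)) for |mu| <= 1/2, so the Chernoff bound at the
   deviation t = sqrt (C / (k v)), where p (1 - p) = 1 / v, is exp (- C / 8) on each side
   as soon as C v <= 4 k.  This follows from v <= 4 b and k >= b C, which is all that is
   needed of the hypothesis on k (E_max >= 1 once there is an edge).  A union bound over the at most n^2 edges together with
   C >= 24 ln (n / delta) concludes. *)

Lemma expR_le_quad {R : realType} (x : R) : x <= 1 / 2 -> expR x <= 1 + x + 2 * x ^+ 2.
Proof.
move=> x_le.
have -> : expR x = 1 / expR (- x) by rewrite expRN invrK mul1r.
rewrite ler_pdivrMr ?expR_gt0 //.
have quad_ge0 : 0 <= 1 + x + 2 * x ^+ 2 by nra.
apply: le_trans (ler_wpM2l quad_ge0 (expR_ge1Dx (- x))).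
nra.
Qed.

Lemma bernoulli_mgf_le {R : realType} (p mu : R) :
  0 <= p <= 1 -> `|mu| <= 1 / 2 ->
  p * expR (mu * (1 - p)) + (1 - p) * expR (mu * (0 - p))
    <= expR (2 * mu ^+ 2 * (p * (1 - p))).
Proof.
move=> /andP[p_ge0 p_le1]; rewrite ler_norml => /andP[mu_ge mu_le].
have win : expR (mu * (1 - p)) <= 1 + mu * (1 - p) + 2 * (mu * (1 - p)) ^+ 2.
  by apply: expR_le_quad; nra.
have loss : expR (mu * (0 - p)) <= 1 + mu * (0 - p) + 2 * (mu * (0 - p)) ^+ 2.
  by apply: expR_le_quad; nra.
apply: le_trans (expR_ge1Dx _).
apply: le_trans (lerD (ler_wpM2l p_ge0 win) (ler_wpM2l _ loss)) _; first lra.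
by rewrite le_eqVlt; apply/orP; left; apply/eqP; ring.
Qed.

Lemma sum_le_sum_mulr {R : realType} (T : finType) (P : pred T) (f u : T -> R) :
  (forall x, 0 <= f x) -> (forall x, 0 <= u x) -> (forall x, P x -> 1 <= u x) ->
  \sum_(x | P x) f x <= \sum_x f x * u x.
Proof.
move=> f_ge0 u_ge0 u_ge1; rewrite big_mkcond; apply: ler_sum => x _.
by case: ifP => Px; [apply: ler_peMr; last apply: u_ge1 | apply: mulr_ge0].
Qed.

Lemma ln_div_ge1 {R : realType} {N delta : R} :
  1 <= N -> 0 < delta -> delta <= expR (-1) -> 1 <= ln (N / delta).
Proof.
move=> N_ge1 delta_gt0 delta_le.
rewrite -[X in X <= _](expRK 1) ler_ln ?posrE ?expR_gt0 ?divr_gt0 //; last lra.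
rewrite ler_pdivlMr // mulrC.
apply: le_trans (ler_wpM2r (expR_ge0 1) delta_le) _.
by rewrite -expRD addNr expR0.
Qed.

(* The left side is at most [2 N^2 (delta / N)^3 = 2 delta^3 / N], and [2 delta^2 <= 1 <= N]. *)
Lemma union_tail_le {R : realType} {N delta C : R} :
  1 <= N -> 0 < delta -> delta <= expR (-1) -> 24 * ln (N / delta) <= C ->
  2 * N ^+ 2 * expR (- (C / 8)) <= delta.
Proof.
move=> N_ge1 delta_gt0 delta_le C_ge.
have N_gt0 : 0 < N by lra.
have ratio_gt0 : 0 < N / delta by rewrite divr_gt0.
have tail_le : expR (- (C / 8)) * (N / delta) ^+ 3 <= 1.
  rewrite -(lnK ratio_gt0) -expRM_natl -expRD -[X in _ <= X]expR0 ler_expR; lra.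
have delta_le_half : delta <= 1 / 2.
  apply: le_trans delta_le _.
  have e_ge2 := expR_ge1Dx (1 : R).
  rewrite expRN -[X in X <= _]mul1r ler_pdivrMr ?expR_gt0 //; lra.
move: tail_le; rewrite expr_div_n mulrA ler_pdivrMr ?exprn_gt0 // mul1r => tail_le.
rewrite -(ler_pM2l N_gt0).
have -> : N * (2 * N ^+ 2 * expR (- (C / 8))) = 2 * (expR (- (C / 8)) * N ^+ 3) by ring.
have : delta ^+ 3 * 2 <= N * delta.
  have -> : delta ^+ 3 * 2 = (delta ^+ 2 * 2) * delta by ring.
  by apply: ler_wpM2r; [lra | nra].
lra.
Qed.

Lemma E_max_ge1 {n : nat} {E : {set 'I_n * 'I_n}} {e : 'I_n * 'I_n} :
  oriented_simple_graph E -> e \in E -> (1 <= E_max E)%N.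
Proof.
case: e => i j [irrefl _] eE.
apply: leq_trans (leq_bigmax (i, j)); apply/card_gt0P; exists (i, j).
rewrite inE eE /=; apply/asboolP; exists [:: j]; split => //=.
- by rewrite /adj eE.
- by rewrite inE andbT; apply: (irrefl (i, j) eE).
- by rewrite inE eqxx.
Qed.

Lemma prodr_if_fst_eq {R : comPzRingType} {I J : finType} (i0 : I) (F : I * J -> R) :
  \prod_(x : I * J) (if x.1 == i0 then F x else 1) = \prod_(j : J) F (i0, j).
Proof.
rewrite (eq_bigr (fun x => (fun i j => if i == i0 then F (i, j) else 1) x.1 x.2)); last by case.
rewrite -(pair_bigA _ (fun i j => if i == i0 then F (i, j) else 1)) /=.
rewrite (bigD1 i0) //= eqxx [X in _ * X]big1 ?mulr1 // => i /negbTE i_neq.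
by apply: big1 => j _; rewrite i_neq.
Qed.

Section Comparisons.
Context {R : realType} {n : nat} {w : 'I_n -> R}.
Hypothesis w_gt0 : forall i, 0 < w i.

Lemma pwin_itv (i j : 'I_n) : 0 <= pwin w i j <= 1.
Proof.
have := w_gt0 i; have := w_gt0 j => wj wi.
rewrite /pwin divr_ge0 ?ler_pdivrMr ?mul1r /=; lra.
Qed.

Lemma vcoef_gt0 (i j : 'I_n) : 0 < vcoef w i j.
Proof. by rewrite /vcoef !addr_gt0 ?divr_gt0. Qed.

Lemma pwin_var (i j : 'I_n) : pwin w i j * (1 - pwin w i j) = (vcoef w i j)^-1.
Proof.
have := w_gt0 i; have := w_gt0 j => wj wi.
rewrite /pwin /vcoef; field.
by rewrite !lt0r_neq0 //; nra.
Qed.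

Lemma vcoef_le (b : R) (i j : 'I_n) :
  (forall i j, w i / w j <= b) -> vcoef w i j <= 4 * b.
Proof.
move=> ratio_le; have := ratio_le i j; have := ratio_le j i; have := ratio_le i i.
by rewrite divff ?lt0r_neq0 // /vcoef; lra.
Qed.

Context {k : nat}.
Implicit Types (om : outcome n k) (A B : pred (outcome n k)).

Lemma outcome_prob_ge0 om : 0 <= outcome_prob w om.
Proof.
apply: prodr_ge0 => x _; have /andP[p_ge0 p_le1] := pwin_itv x.1.1 x.1.2.
by case: (om x); rewrite ?subr_ge0.
Qed.

Lemma Prob_sub {A B} : (forall om, A om -> B om) -> Prob w A <= Prob w B.
Proof.
move=> AB; rewrite /Prob [X in _ <= X]big_mkcond [X in X <= _]big_mkcond.
apply: ler_sum => om _; case: ifP => [/AB -> // | _].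
by case: ifP => _; rewrite ?outcome_prob_ge0.
Qed.

Lemma Prob_orb_le A B : Prob w (fun om => A om || B om) <= Prob w A + Prob w B.
Proof.
rewrite /Prob [X in X <= _]big_mkcond [\sum_(om | A om) _]big_mkcond.
rewrite [\sum_(om | B om) _]big_mkcond -big_split /=.
apply: ler_sum => om _; have := outcome_prob_ge0 om.
by case: (A om); case: (B om) => /=; lra.
Qed.

Lemma Prob_exists_le {I : finType} (S : {set I}) (A : I -> pred (outcome n k)) :
  Prob w (fun om => [exists e in S, A e om]) <= \sum_(e in S) Prob w (A e).
Proof.
pose u om := \sum_(e in S) (A e om)%:R : R.
apply: le_trans (@sum_le_sum_mulr _ _ _ _ u outcome_prob_ge0 _ _) _.
- by move=> om; apply: sumr_ge0 => e _; apply: ler0n.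
- move=> om /existsP[e /andP[eS Aeom]]; rewrite /u (bigD1 e) //= Aeom lerDl.
  by apply: sumr_ge0 => e' _; apply: ler0n.
rewrite /u; under eq_bigr do rewrite mulr_sumr; rewrite exchange_big /=.
apply: ler_sum => e _; rewrite /Prob [X in _ <= X]big_mkcond; apply: ler_sum => om _.
by case: (A e om); rewrite ?mulr1 ?mulr0.
Qed.

Lemma Prob_ge_le_expR (X : outcome n k -> R) (a : R) :
  Prob w (fun om => a <= X om)
    <= expR (- a) * \sum_om outcome_prob w om * expR (X om).
Proof.
rewrite mulr_sumr; under [X in _ <= X]eq_bigr do rewrite mulrCA -expRD addrC.
apply: sum_le_sum_mulr => [om | om | om]; rewrite ?outcome_prob_ge0 ?expR_ge0 //.
by move=> a_le; rewrite -expR0 ler_expR subr_ge0.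
Qed.

(* Independence: the coordinates outside edge [(i, j)] marginalise out, those on it factorise. *)
Lemma outcome_prob_edge_prod (i j : 'I_n) (f : bool -> R) :
  \sum_(om : outcome n k) outcome_prob w om * \prod_(t < k) f (om ((i, j), t))
    = (pwin w i j * f true + (1 - pwin w i j) * f false) ^+ k.
Proof.
pose H (x : ('I_n * 'I_n) * 'I_k) (b : bool) :=
  (if b then pwin w x.1.1 x.1.2 else 1 - pwin w x.1.1 x.1.2) *
  (if x.1 == (i, j) then f b else 1).
have factor om : outcome_prob w om * \prod_(t < k) f (om ((i, j), t)) = \prod_x H x (om x).
  by rewrite /outcome_prob /H big_split /= (prodr_if_fst_eq (i, j) (fun x => f (om x))).
rewrite (eq_bigr _ (fun om _ => factor om)) -(bigA_distr_bigA H) /=.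
have marginal x : \sum_b H x b =
    if x.1 == (i, j) then pwin w i j * f true + (1 - pwin w i j) * f false else 1.
  by rewrite big_bool /H; case: eqP => [-> | _] //=; rewrite !mulr1 addrC subrK.
rewrite (eq_bigr _ (fun x _ => marginal x)).
by rewrite (prodr_if_fst_eq (i, j) (fun _ => _)) prodr_const card_ord.
Qed.

Lemma natr_mul_Frac om (i j : 'I_n) :
  (0 < k)%N -> k%:R * Frac om i j = (\sum_(t < k) (om ((i, j), t) : nat))%:R :> R.
Proof. by move=> k_gt0; rewrite /Frac mulrC divfK ?pnatr_eq0 -?lt0n. Qed.

Lemma mgf_Frac_le (i j : 'I_n) (mu : R) : (0 < k)%N -> `|mu| <= 1 / 2 ->
  \sum_(om : outcome n k) outcome_prob w om * expR (mu * (k%:R * (Frac om i j - pwin w i j)))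
    <= expR (k%:R * (2 * mu ^+ 2 * (pwin w i j * (1 - pwin w i j)))).
Proof.
move=> k_gt0 mu_le; set p := pwin w i j.
have expR_Frac om : expR (mu * (k%:R * (Frac om i j - p)))
    = \prod_(t < k) expR (mu * ((om ((i, j), t) : nat)%:R - p)).
  rewrite -expR_sum -mulr_sumr sumrB sumr_const card_ord -natr_sum.
  by rewrite mulrBr natr_mul_Frac // mulr_natl.
under eq_bigr do rewrite expR_Frac.
rewrite (outcome_prob_edge_prod i j (fun b => expR (mu * ((b : nat)%:R - p)))) expRM_natl.
apply: lerXn2r; rewrite ?nnegrE ?expR_ge0 //; last exact: bernoulli_mgf_le (pwin_itv i j) mu_le.
have /andP[p_ge0 p_le1] := pwin_itv i j.
by rewrite addr_ge0 // mulr_ge0 ?expR_ge0 ?subr_ge0.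
Qed.

(* Exponential Markov with [lam = t v / 4], the minimiser of [2 k lam^2 / v - lam k t];
   it is admissible ([lam <= 1/2]) because [C v <= 4 k]. *)
Lemma Prob_Frac_dev_signed_le (i j : 'I_n) (C s : R) :
  0 < C -> C * vcoef w i j <= 4 * k%:R -> `|s| = 1 ->
  Prob w (fun om => Num.sqrt (C / (k%:R * vcoef w i j)) <= s * (Frac om i j - pwin w i j))
    <= expR (- (C / 8)).
Proof.
move=> C_gt0 Cv_le s_norm.
set v := vcoef w i j in Cv_le *; set p := pwin w i j; set t := Num.sqrt _.
have v_gt0 : 0 < v := vcoef_gt0 i j.
have kR_gt0 : 0 < k%:R :> R by have := mulr_gt0 C_gt0 v_gt0; lra.
have k_gt0 : (0 < k)%N by rewrite -(ltr0n R).
have t_ge0 : 0 <= t := sqrtr_ge0 _.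
have t_sq : t ^+ 2 = C / (k%:R * v) by rewrite sqr_sqrtr // divr_ge0 ?mulr_ge0; lra.
pose lam := t * v / 4.
have lam_ge0 : 0 <= lam by rewrite /lam !mulr_ge0 //; lra.
have lam_le : lam <= 1 / 2.
  have : (t * v) ^+ 2 <= 4.
    have -> : (t * v) ^+ 2 = C * v / k%:R by rewrite exprMn t_sq; field; rewrite !lt0r_neq0.
    by rewrite ler_pdivrMr.
  rewrite /lam; nra.
have event_sub om : t <= s * (Frac om i j - p) ->
    lam * k%:R * t <= s * lam * (k%:R * (Frac om i j - p)).
  have -> : s * lam * (k%:R * (Frac om i j - p)) = lam * k%:R * (s * (Frac om i j - p)) by ring.
  by apply: ler_wpM2l; rewrite mulr_ge0.
apply: le_trans (Prob_sub event_sub) _.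
apply: le_trans (Prob_ge_le_expR _ _) _.
apply: le_trans (ler_wpM2l (expR_ge0 _) (mgf_Frac_le i j (s * lam) k_gt0 _)) _.
  by rewrite normrM s_norm ger0_norm //; lra.
rewrite -expRD ler_expR pwin_var -/v exprMn -real_normK ?num_real // s_norm expr1n mul1r.
have -> : - (lam * k%:R * t) + k%:R * (2 * lam ^+ 2 * v^-1) = - (k%:R * t ^+ 2 * v / 8).
  by rewrite /lam; field; rewrite lt0r_neq0.
by rewrite t_sq le_eqVlt; apply/orP; left; apply/eqP; field; rewrite !lt0r_neq0.
Qed.

Lemma Prob_Frac_dev_le (i j : 'I_n) (C : R) :
  0 < C -> C * vcoef w i j <= 4 * k%:R ->
  Prob w (fun om => Num.sqrt (C / (k%:R * vcoef w i j)) <= `|Frac om i j - pwin w i j|)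
    <= 2 * expR (- (C / 8)).
Proof.
move=> C_gt0 Cv_le; set t := Num.sqrt _.
have dev_split om : t <= `|Frac om i j - pwin w i j| ->
    (t <= 1 * (Frac om i j - pwin w i j)) || (t <= -1 * (Frac om i j - pwin w i j)).
  by rewrite mul1r mulN1r ler_normr.
apply: le_trans (Prob_sub dev_split) _; apply: le_trans (Prob_orb_le _ _) _.
rewrite mulr_natl mulr2n; apply: lerD; apply: Prob_Frac_dev_signed_le => //.
- exact: normr1.
- by rewrite normrN normr1.
Qed.

End Comparisons.

Theorem lemma1 (R : realType) :
  exists c1 c2 : R, 0 < c1 /\ 0 < c2 /\
  forall (n : nat) (E : {set 'I_n * 'I_n}) (w : 'I_n -> R) (b : R)
         (Ldag : 'M[R]_n) (delta C : R) (k : nat),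
    oriented_simple_graph E ->
    connected_graph E ->
    (forall i, 0 < w i) ->
    (forall i j, w i / w j <= b) ->
    is_MP_pinv (laplacian E) Ldag ->
    0 < delta -> delta <= expR (-1) ->
    c1 * ln (n%:R / delta) <= C ->
    c2 * b * (C + 1) * Num.max (Omega_max Ldag) (E_max E)%:R <= k%:R ->
    Prob w (fun om : outcome n k =>
      [exists e in E,
        Num.sqrt (C / (k%:R * vcoef w e.1 e.2))
          <= `|Frac om e.1 e.2 - pwin w e.1 e.2| ]) <= delta.
Proof.
exists 24, 1; split; first lra; split; first lra.
move=> n E w b Ldag delta C k E_simple _ w_gt0 ratio_le _ delta_gt0 delta_le C_ge k_ge.
case: (set_0Vmem E) => [-> | [e0 e0E]].
  rewrite /Prob big_pred0 ?ltW // => om.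
  by apply/existsP => -[e]; rewrite inE.
have n_ge1 : 1 <= n%:R :> R by rewrite ler1n (leq_ltn_trans (leq0n _) (ltn_ord e0.1)).
have C_gt0 : 0 < C by have := ln_div_ge1 n_ge1 delta_gt0 delta_le; lra.
have b_ge1 : 1 <= b by have := ratio_le e0.1 e0.1; rewrite divff ?lt0r_neq0.
have max_ge1 : 1 <= Num.max (Omega_max Ldag) (E_max E)%:R.
  by rewrite le_max ler1n (E_max_ge1 E_simple e0E) orbT.
have Cv_le e : C * vcoef w e.1 e.2 <= 4 * k%:R.
  have := vcoef_le w_gt0 b e.1 e.2 ratio_le.
  have : b * (C + 1) <= b * (C + 1) * Num.max (Omega_max Ldag) (E_max E)%:R.
    by rewrite ler_peMr // mulr_ge0; lra.
  nra.
apply: le_trans (Prob_exists_le w_gt0 _ _) _.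
apply: (@le_trans _ _ (\sum_(e in E) 2 * expR (- (C / 8)))).
  apply: ler_sum => e _; apply: Prob_Frac_dev_le; [exact: w_gt0 | exact: C_gt0 | exact: Cv_le].
apply: le_trans (union_tail_le n_ge1 delta_gt0 delta_le C_ge).
have card_E : #|E|%:R <= n%:R ^+ 2 :> R.
  by rewrite -natrX ler_nat (leq_trans (max_card E)) // card_prod card_ord.
rewrite sumr_const -mulr_natr; have := expR_ge0 (- (C / 8)); nra.
Qed.
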